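(* In every BZ algebra, and in every BCC algebra, property (Ex) holds if and only if property (BB) holds.
   Context: Let $(A,\to,1)$ be an algebra of type $(2,0)$. Properties, required for all $x,y,z\in A$: (Re) $x\to x=1$; (M) $1\to x=x$; (L) $x\to 1=1$; (B) $(y\to z)\to((x\to y)\to(x\to z))=1$; (An) $x\to y=1$ and $y\to x=1$ imply $x=y$; (Ex) $x\to(y\to z)=y\to(x\to z)$; (BB) $(y\to z)\to((z\to x)\to(y\to x))=1$. A BZ algebra is an algebra satisfying (Re), (M), (B), (An). A BCC algebra is an algebra satisfying (Re), (M), (L), (B), (An). *)

Definition prop_Re {A : Type} (imp : A -> A -> A) (one : A) : Prop :=
  forall x, imp x x = one.
Definition prop_M {A : Type} (imp : A -> A -> A) (one : A) : Prop :=
  forall x, imp one x = x.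
Definition prop_L {A : Type} (imp : A -> A -> A) (one : A) : Prop :=
  forall x, imp x one = one.
Definition prop_B {A : Type} (imp : A -> A -> A) (one : A) : Prop :=
  forall x y z, imp (imp y z) (imp (imp x y) (imp x z)) = one.
Definition prop_An {A : Type} (imp : A -> A -> A) (one : A) : Prop :=
  forall x y, imp x y = one -> imp y x = one -> x = y.
Definition prop_Ex {A : Type} (imp : A -> A -> A) : Prop :=
  forall x y z, imp x (imp y z) = imp y (imp x z).
Definition prop_BB {A : Type} (imp : A -> A -> A) (one : A) : Prop :=
  forall x y z, imp (imp y z) (imp (imp z x) (imp y x)) = one.

Definition is_BZ_algebra {A : Type} (imp : A -> A -> A) (one : A) : Prop :=
  prop_Re imp one /\ prop_M imp one /\ prop_B imp one /\ prop_An imp one.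
Definition is_BCC_algebra {A : Type} (imp : A -> A -> A) (one : A) : Prop :=
  prop_Re imp one /\ prop_M imp one /\ prop_L imp one /\ prop_B imp one /\ prop_An imp one.

(* (Ex) lets one swap the two antecedents of (B), which gives (BB).
   Conversely, (BB) with (M) yields [z -> ((z -> x) -> x) = 1] and the
   transitivity of [x -> y = 1]; chaining two instances of (BB) through
   [(y -> z) -> z] gives [(x -> (y -> z)) -> (y -> (x -> z)) = 1] for all
   x, y, z, and (An) applied to this and its mirror image is (Ex). *)


Section ExchangeVsBB.

Context {A : Type} {imp : A -> A -> A} {one : A}.

Lemma prop_BB_of_Ex_B : prop_Ex imp -> prop_B imp one -> prop_BB imp one.
Proof.
  intros Ex B x y z.
  rewrite Ex.
  apply B.
Qed.

Section FromBB.

Hypotheses (M : prop_M imp one) (BB : prop_BB imp one).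

Lemma BB_imp_modus_ponens (z x : A) : imp z (imp (imp z x) x) = one.
Proof.
  pose proof (BB x one z) as H.
  rewrite !M in H.
  exact H.
Qed.

Lemma BB_imp_trans (a b c : A) :
  imp a b = one -> imp b c = one -> imp a c = one.
Proof.
  intros Hab Hbc.
  pose proof (BB c a b) as H.
  rewrite Hab, Hbc, !M in H.
  exact H.
Qed.

Lemma BB_imp_exchange (x y z : A) :
  imp (imp x (imp y z)) (imp y (imp x z)) = one.
Proof.
  apply BB_imp_trans with (imp (imp (imp y z) z) (imp x z)).
  - apply BB.
  - pose proof (BB (imp x z) y (imp (imp y z) z)) as H.
    rewrite BB_imp_modus_ponens, M in H.
    exact H.
Qed.

Lemma prop_Ex_of_BB (An : prop_An imp one) : prop_Ex imp.
Proof.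
  intros x y z.
  apply An; apply BB_imp_exchange.
Qed.

End FromBB.

Lemma BZ_Ex_iff_BB : is_BZ_algebra imp one -> (prop_Ex imp <-> prop_BB imp one).
Proof.
  intros [_ [M [B An]]].
  split.
  - intros Ex. exact (prop_BB_of_Ex_B Ex B).
  - intros BB. exact (prop_Ex_of_BB M BB An).
Qed.

Lemma BCC_is_BZ : is_BCC_algebra imp one -> is_BZ_algebra imp one.
Proof.
  intros [Re [M [_ [B An]]]].
  repeat split; assumption.
Qed.

End ExchangeVsBB.

Theorem corollary2p5 :
  (forall (A : Type) (imp : A -> A -> A) (one : A),
      is_BZ_algebra imp one -> (prop_Ex imp <-> prop_BB imp one)) /\
  (forall (A : Type) (imp : A -> A -> A) (one : A),
      is_BCC_algebra imp one -> (prop_Ex imp <-> prop_BB imp one)).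
Proof.
  split.
  - intros A imp one HBZ.
    exact (BZ_Ex_iff_BB HBZ).
  - intros A imp one HBCC.
    exact (BZ_Ex_iff_BB (BCC_is_BZ HBCC)).
Qed.
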